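(* Let $y:[t_0,\infty)\to[0,\infty)$ be a nondecreasing, nonnegative, differentiable function that is not identically zero, where $t_0>1$ is fixed. Let $0\le\delta<\tfrac45$. If there are constants $C_3,C_4>0$ such that $$y(t)\le C_3t^{\delta}y'(t)+C_4t^{\frac{5\delta-1}{2}}[y'(t)]^{\frac32}\quad\text{for all }t\ge t_0,$$ then $$\liminf_{t\to+\infty}t^{5\delta-4}y(t)>0.$$ *)

From HB Require Import structures.
From mathcomp Require Import all_boot all_order all_algebra.
From mathcomp Require Import all_classical all_reals all_analysis.

From HB Require Import structures.
From mathcomp Require Import all_boot all_order all_algebra.
From mathcomp Require Import all_classical all_reals all_analysis.
From mathcomp Require Import ring lra.
Import Order.TTheory GRing.Theory Num.Theory.
Import numFieldNormedType.Exports.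
Local Open Scope classical_set_scope.
Local Open Scope ring_scope.

(* Put e = 4 - 5 delta > 0 and q = (5 delta - 1) / 2.  For t large and K small,
   a bound y t >= K t^e propagates from t to 2 t.  By the mean value theorem
   y (2 t) = y t + t y'(x) with t < x < 2 t, and since y t <= y x one of the
   two terms of the inequality at x is at least y t / 2.  If it is the linear
   one, t y'(x) >= c t^(1 - delta) y t, which exceeds 2^e y t once t is large.
   If it is the 3/2-power one, y'(x)^(3/2) >= c' K t^(e - q), and as
   e - q = 3 (e - 1) / 2 this gives t y'(x) >= (c' K)^(2/3) t^e, which exceeds
   2^e K t^e once K is small.  Iterating along the points 2^n T and using
   monotonicity in between yields y s >= 2^-e K s^e for all s >= T. *)

Section RealLemmas.
Context {R : realType}.

Lemma right_min_is_derive_ge0 {f : R -> R} {x d : R} :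
  (forall s, x <= s -> f x <= f s) -> is_derive x 1 f d -> 0 <= d.
Proof.
move=> fmin fd; rewrite -(@derive_val _ _ _ _ _ _ _ fd) /derive.
have cv := @ex_derive _ _ _ _ _ _ _ fd.
rewrite (cvg_at_rightE _ _ cv); apply: limr_ge.
  by apply/cvg_ex; eexists; apply: cvg_dnbhs_at_right; apply: cv.
near=> h.
have h0 : 0 < h by near: h; exact: nbhs_right_gt.
rewrite /= scaler1 /shift /=.
by apply: mulr_ge0; rewrite ?invr_ge0 ?subr_ge0 ?fmin ?lerDr ?ltW.
Unshelve. all: end_near.
Qed.

Lemma powR_doubling_le (a t x : R) :
  0 < t -> t <= x <= 2 * t -> x `^ a <= 2 `^ `|a| * t `^ a.
Proof.
move=> t0 /andP[tx x2t].
have x0 : 0 < x by exact: lt_le_trans tx.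
have -> : x = t * (x / t) by rewrite mulrC divfK ?gt_eqF.
rewrite powRM ?(ltW t0) ?(ltW (divr_gt0 x0 t0))// mulrC.
apply: ler_wpM2r; first exact: powR_ge0.
have xt1 : 1 <= x / t by rewrite ler_pdivlMr// mul1r.
apply: (le_trans (ler_powR xt1 (ler_norm a))).
by apply: ge0_ler_powR; rewrite ?nnegrE ?normr_ge0 ?ler_pdivrMr ?(le_trans ler01 xt1).
Qed.

Lemma dyadic_bracket {T s : R} :
  0 < T -> T <= s -> exists n, 2 ^+ n * T <= s <= 2 ^+ n.+1 * T.
Proof.
move=> T0 Ts.
have [m sm] : exists m, s <= 2 ^+ m * T.
  exists (Num.bound (s / T)).
  have s_lt := archi_boundP (divr_ge0 (le_trans (ltW T0) Ts) (ltW T0)).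
  have bound_le : (Num.bound (s / T))%:R <= 2 ^+ Num.bound (s / T) :> R.
    by rewrite -natrX ler_nat ltnW// ltn_expl.
  by rewrite -ler_pdivrMr//; apply/ltW/(lt_le_trans s_lt).
elim: m sm => [|m IHm] sm.
  by exists 0%N; rewrite expr0 expr1 mul1r Ts /=; rewrite expr0 mul1r in sm; lra.
have [|sm'] := leP s (2 ^+ m * T); first exact: IHm.
by exists m; rewrite ltW.
Qed.

Lemma doubling_lower_bound (f : R -> R) (T K e : R) :
  0 < T -> 0 <= K -> 0 <= e ->
  (forall s t, T <= s -> s <= t -> f s <= f t) ->
  (forall t, T <= t -> K * t `^ e <= f t -> K * (2 * t) `^ e <= f (2 * t)) ->
  K * T `^ e <= f T ->
  forall s, T <= s -> K / 2 `^ e * s `^ e <= f s.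
Proof.
move=> T0 K0 e0 fmono fdouble fT.
have T_le_dyadic n : T <= 2 ^+ n * T.
  by rewrite ler_peMl ?(ltW T0)// exprn_ege1// ler1n.
have dyadic n : K * (2 ^+ n * T) `^ e <= f (2 ^+ n * T).
  by elim: n => [|n IHn]; rewrite ?expr0 ?mul1r// exprS -mulrA fdouble.
move=> s Ts; have [n /andP[ns sn]] := dyadic_bracket T0 Ts.
have dyadic_ge0 : 0 <= 2 ^+ n * T by rewrite mulr_ge0 ?exprn_ge0// ltW.
have s_pow : s `^ e <= 2 `^ e * (2 ^+ n * T) `^ e.
  rewrite -powRM// mulrA -exprS; apply: ge0_ler_powR => //; rewrite nnegrE.
    exact: le_trans dyadic_ge0 ns.
  exact: le_trans dyadic_ge0 (le_trans ns sn).
have : K / 2 `^ e * s `^ e <= K * (2 ^+ n * T) `^ e.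
  by rewrite -mulrA ler_wpM2l// ler_pdivrMl ?powR_gt0.
have := dyadic n; have := fmono _ _ (T_le_dyadic n) ns; lra.
Qed.

Lemma limf_einf_pinfty_gt0 (g : R -> R) (c T : R) :
  0 < c -> (forall s, T <= s -> c <= g s) ->
  (0 < limf_einf (fun t => (g t)%:E) (pinfty_nbhs R))%E.
Proof.
move=> c0 gc; rewrite limf_einfE; apply: (@lt_le_trans _ _ c%:E); first by rewrite lte_fin.
apply: (@le_trans _ _ (ereal_inf [set (g t)%:E | t in [set t | T <= t]])).
  by apply: le_ereal_inf_tmp => _ [s Ts <-]; rewrite lee_fin gc.
apply: ereal_sup_ubound; exists [set t | T <= t] => //.
by exists T; split; [exact: num_real | move=> x /ltW].
Qed.

Lemma le_powR_of_root_le {M a t : R} : 0 <= M -> 0 < a -> M `^ a^-1 <= t -> M <= t `^ a.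
Proof.
move=> M0 a0 Mt; rewrite -[M](powRr1 M0) -[1](mulVf (lt0r_neq0 a0)) powRrM.
apply: ge0_ler_powR; rewrite ?nnegrE ?powR_ge0 ?(ltW a0)//.
exact: le_trans (powR_ge0 _ _) Mt.
Qed.

Lemma exists_small_cube {L c Y : R} :
  0 < L -> 0 < c -> 0 < Y -> exists2 v, 0 < v & v * L <= 1 /\ c * v ^+ 3 <= Y.
Proof.
move=> L0 c0 Y0; exists (Num.min L^-1 (Num.min 1 (Y / c))).
  by rewrite !lt_min invr_gt0 L0 ltr01 divr_gt0.
set v := Num.min _ _; have v0 : 0 < v by rewrite !lt_min invr_gt0 L0 ltr01 divr_gt0.
have vL : v <= L^-1 by rewrite ge_min lexx.
have v1 : v <= 1 by rewrite !ge_min lexx orbT.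
have vY : v <= Y / c by rewrite !ge_min lexx !orbT.
split; first by rewrite -ler_pdivlMr// div1r.
have v3 : v ^+ 3 <= v by nra.
by rewrite mulrC -ler_pdivlMr// (le_trans v3).
Qed.

Lemma linear_term_bound {C a P t x Y z : R} :
  0 < C -> 0 <= P -> 0 < t -> t <= x <= 2 * t -> 0 <= z ->
  2 * C * 2 `^ `|a| * P <= t `^ (1 - a) ->
  Y <= 2 * (C * x `^ a * z) -> P * Y <= t * z.
Proof.
move=> C0 P0 t0 xt z0 t_large Yx.
have -> : t = t `^ (1 - a) * t `^ a.
  rewrite -powRD; last by rewrite (gt_eqF t0) implybT.
  by rewrite subrK powRr1// ltW.
have := ler_wpM2l P0 Yx.
have := ler_wpM2r (mulr_ge0 (powR_ge0 t a) z0) t_large.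
have : 2 * C * P * (x `^ a * z) <= 2 * C * P * (2 `^ `|a| * t `^ a * z).
  by rewrite ler_wpM2l ?ler_wpM2r ?powR_doubling_le// !mulr_ge0// ltW.
lra.
Qed.

Lemma power_term_bound {C q t x Y z v : R} :
  0 < C -> 0 < t -> t <= x <= 2 * t -> 0 <= z -> 0 <= v ->
  2 * C * 2 `^ `|q| * v ^+ 3 * t `^ (3 - 2 * q) <= Y ->
  Y <= 2 * (C * x `^ q * z `^ (3 / 2)) ->
  v ^+ 2 * t `^ (3 - 2 * q) <= t * z.
Proof.
move=> C0 t0 xt z0 v0 Ylow Yup.
set w := v ^+ 2 * t `^ (2 - 2 * q).
have w0 : 0 <= w by rewrite mulr_ge0 ?exprn_ge0 ?powR_ge0.
have tw : t * w = v ^+ 2 * t `^ (3 - 2 * q).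
  rewrite mulrCA -{1}(powRr1 (ltW t0)) -powRD ?(gt_eqF t0) ?implybT//.
  by congr (_ * t `^ _); ring.
have w32 : w `^ (3 / 2) * t `^ q = v ^+ 3 * t `^ (3 - 2 * q).
  rewrite powRM ?exprn_ge0 ?powR_ge0// -!(powR_mulrn _ v0) -!powRrM -mulrA.
  rewrite -powRD ?(gt_eqF t0) ?implybT//.
  by congr (v `^ _ * t `^ _); field.
have k0 : 0 < 2 * C * 2 `^ `|q| * t `^ q by rewrite !mulr_gt0 ?powR_gt0.
have key : w `^ (3 / 2) <= z `^ (3 / 2).
  rewrite -(ler_pM2l k0).
  have : 2 * C * x `^ q * z `^ (3 / 2) <=
         2 * C * (2 `^ `|q| * t `^ q) * z `^ (3 / 2).
    by rewrite ler_wpM2r ?powR_ge0// ler_wpM2l ?powR_doubling_le// mulr_ge0// ltW.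
  have : 2 * C * 2 `^ `|q| * t `^ q * w `^ (3 / 2) =
         2 * C * 2 `^ `|q| * v ^+ 3 * t `^ (3 - 2 * q) by rewrite mulrAC -mulrA w32 mulrA.
  lra.
rewrite -tw; apply: ler_wpM2l; first exact: ltW.
rewrite leNgt; apply/negP => zw.
have pos32 : 0 < 3 / 2 :> R by rewrite divr_gt0.
by move: (gt0_ltr_powR pos32 z0 w0 zw); rewrite ltNge key.
Qed.

End RealLemmas.

Section DifferentialInequality.
Context {R : realType} {t0 delta C3 C4 : R} {y y' : R -> R}.
Hypothesis t0_ge0 : 0 <= t0.
Hypothesis delta_lt : delta < 4 / 5.
Hypothesis y_ge0 : forall t, t0 <= t -> 0 <= y t.
Hypothesis y_mono : forall s t, t0 <= s -> s <= t -> y s <= y t.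
Hypothesis y_neq0 : exists t, t0 <= t /\ y t != 0.
Hypothesis y_der : forall t, t0 < t -> is_derive t 1 y (y' t).
Hypotheses (C3_gt0 : 0 < C3) (C4_gt0 : 0 < C4).
Hypothesis y_ineq : forall t, t0 <= t ->
  y t <= C3 * t `^ delta * y' t
         + C4 * t `^ ((5 * delta - 1) / 2) * (y' t) `^ (3 / 2).

Local Notation q := ((5 * delta - 1) / 2).
Local Notation e := (4 - 5 * delta).

Lemma doubling_increment {t : R} : t0 < t ->
  exists x, [/\ t < x < 2 * t, y (2 * t) = y t + t * y' x & 0 <= y' x].
Proof.
move=> t0t; have t_gt0 : 0 < t by exact: le_lt_trans t0_ge0 t0t.
have [x] : exists2 x, x \in `]t, 2 * t[ & y (2 * t) - y t = y' x * (2 * t - t).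
  apply: MVT; first lra.
    by move=> x; rewrite in_itv/= => /andP[tx _]; apply: y_der; lra.
  apply: derivable_within_continuous => x; rewrite in_itv/= => /andP[tx _].
  by case: (y_der x _) => //; lra.
rewrite in_itv/= => /andP[tx x2t] incr; exists x; split; [by rewrite tx | lra |].
apply: (right_min_is_derive_ge0 _ (y_der _ _)); last lra.
by move=> s xs; apply: y_mono => //; lra.
Qed.

Lemma doubling_step (v t : R) :
  t0 < t -> 0 <= v -> v * (2 * C4 * 2 `^ `|q| * 2 `^ e) <= 1 ->
  2 * C3 * 2 `^ `|delta| * 2 `^ e <= t `^ (1 - delta) ->
  2 * C4 * 2 `^ `|q| * v ^+ 3 * t `^ e <= y t ->
  2 * C4 * 2 `^ `|q| * v ^+ 3 * (2 * t) `^ e <= y (2 * t).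
Proof.
move=> t0t v0 v_small t_large ylow.
have t_gt0 : 0 < t by exact: le_lt_trans t0_ge0 t0t.
have [x [/andP[tx x2t] -> dx0]] := doubling_increment t0t.
have xt : t <= x <= 2 * t by rewrite !ltW.
set K := 2 * C4 * 2 `^ `|q| * v ^+ 3 in ylow *.
have K0 : 0 <= K by rewrite !mulr_ge0 ?powR_ge0 ?exprn_ge0// ltW.
have yt0 : 0 <= y t by apply: le_trans ylow; rewrite mulr_ge0 ?powR_ge0.
have pow2e_ge0 : 0 <= 2 `^ e by exact: powR_ge0.
rewrite powRM// ?(ltW t_gt0)// mulrCA.
have := y_ineq x (ltW (lt_trans t0t tx)); have := y_mono t x (ltW t0t) (ltW tx).
case: (leP (y t) (2 * (C3 * x `^ delta * y' x))) => [linear|power] yx ineq.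
  have := linear_term_bound C3_gt0 pow2e_ge0 t_gt0 xt dx0 t_large linear.
  have := ler_wpM2l pow2e_ge0 ylow; lra.
have Yup : y t <= 2 * (C4 * x `^ q * y' x `^ (3 / 2)) by lra.
have e_q : e = 3 - 2 * q by field.
have ylow' : K * t `^ (3 - 2 * q) <= y t by rewrite -e_q.
have := power_term_bound C4_gt0 t_gt0 xt dx0 v0 ylow' Yup; rewrite -e_q.
have : K * 2 `^ e <= v ^+ 2.
  have -> : K * 2 `^ e = v ^+ 2 * (v * (2 * C4 * 2 `^ `|q| * 2 `^ e)) by rewrite /K; ring.
  by apply: ler_piMr; rewrite ?exprn_ge0.
move=> Kv; have := ler_wpM2r (powR_ge0 t e) Kv; lra.
Qed.

Lemma eventually_power_lower_bound :
  exists c T, 0 < c /\ forall s, T <= s -> c * s `^ e <= y s.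
Proof.
have [t1 [t0t1 yt1]] := y_neq0.
have e_gt0 : 0 < e by move: delta_lt; rewrite ltr_pdivlMr//; lra.
set D := 2 * C4 * 2 `^ `|q|; have D_gt0 : 0 < D by rewrite !mulr_gt0 ?powR_gt0.
set M := 2 * C3 * 2 `^ `|delta| * 2 `^ e.
have M0 : 0 <= M by rewrite !mulr_ge0 ?powR_ge0// ltW.
set T := Num.max (t1 + 1) (M `^ (1 - delta)^-1).
have t0T : t0 < T by rewrite lt_max; apply/orP; left; lra.
have yT : 0 < y T.
  have yt1_gt0 : 0 < y t1 by rewrite lt_neqAle eq_sym yt1 y_ge0.
  apply: (lt_le_trans yt1_gt0); apply: y_mono => //.
  by rewrite le_max; apply/orP; left; lra.
have pow2e_gt0 : 0 < 2 `^ e by rewrite powR_gt0.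
have Te_gt0 : 0 < T `^ e by rewrite powR_gt0// (le_lt_trans t0_ge0).
have [v v_gt0 [v_small yT_low]] :=
  exists_small_cube (mulr_gt0 D_gt0 pow2e_gt0) (mulr_gt0 D_gt0 Te_gt0) yT.
exists (D * v ^+ 3 / 2 `^ e), T; split.
  by rewrite divr_gt0 ?powR_gt0 ?mulr_gt0 ?exprn_gt0.
apply: doubling_lower_bound.
- exact: le_lt_trans t0_ge0 t0T.
- by rewrite mulr_ge0 ?exprn_ge0 ?ltW.
- exact: ltW.
- by move=> s t Ts st; apply: y_mono => //; lra.
- move=> t Tt; apply: doubling_step; [lra | exact: ltW | exact: v_small |].
  apply: le_powR_of_root_le M0 _ _; first lra.
  by apply: le_trans Tt; rewrite le_max lexx orbT.
- by rewrite mulrAC.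
Qed.

End DifferentialInequality.

Theorem lemma2p2 (R : realType) (t0 delta C3 C4 : R) (y y' : R -> R)
  (ht0 : 1 < t0)
  (hdelta0 : 0 <= delta) (hdelta1 : delta < 4 / 5)
  (hy_nonneg : forall t, t0 <= t -> 0 <= y t)
  (hy_mono : forall s t, t0 <= s -> s <= t -> y s <= y t)
  (hy_nz : exists t, t0 <= t /\ y t != 0)
  (hy_der : forall t, t0 < t -> is_derive t 1 y (y' t))
  (hy_der0 : h^-1 *: (y (h + t0) - y t0) @[h --> 0^'+] --> y' t0)
  (hC3 : 0 < C3) (hC4 : 0 < C4)
  (hineq : forall t, t0 <= t ->
     y t <= C3 * t `^ delta * y' t
            + C4 * t `^ ((5 * delta - 1) / 2) * (y' t) `^ (3 / 2)) :
  (0 < limf_einf (fun t : R => (t `^ (5 * delta - 4) * y t)%:E)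
                 (pinfty_nbhs R))%E.
Proof.
have t0_ge0 : 0 <= t0 by lra.
have [c [T [c_gt0 yc]]] := eventually_power_lower_bound t0_ge0 hdelta1 hy_nonneg
  hy_mono hy_nz hy_der hC3 hC4 hineq.
apply: (@limf_einf_pinfty_gt0 _ _ c (Num.max T 1) c_gt0) => s.
rewrite ge_max => /andP[Ts s1].
have -> : 5 * delta - 4 = - (4 - 5 * delta) by ring.
by rewrite powRN mulrC ler_pdivlMr ?powR_gt0 ?yc//; lra.
Qed.
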